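(* Let $m,n$ be positive integers with $n\le m$. Suppose there is a scheme that encodes every set $S\subseteq[m]$ with $|S|\leq n$ as a bit string $\phi(S)\in\{0,1\}^s$, together with an exact quantum bit-probe query algorithm that, for every such $S$ and every $i\in[m]$, given query $i$ and oracle access to $\phi(S)$, outputs with certainty whether $i\in S$, making only one bit-probe. Then $s\geq m$.
   Context: $[m]=\{0,\dots,m-1\}$. Quantum bit-probe model: the algorithm operates on a Hilbert space $\mathcal H_L\otimes\mathcal H_B\otimes\mathcal H_Z$, where $\mathcal H_L$ holds $\lceil\log_2 s\rceil$ address qubits, $\mathcal H_B$ is one data qubit and $\mathcal H_Z$ is an arbitrary workspace. For an input string $x\in\{0,1\}^s$ the oracle $O_x$ acts on basis states by $|l\rangle|b\rangle|z\rangle\mapsto|l\rangle|b\oplus x_l\rangle|z\rangle$. An algorithm with $t$ probes is a sequence of input-independent unitaries $U_0,\dots,U_t$; on query $i$ it starts in a fixed basis state encoding $i$ (with all other qubits $|0\rangle$), applies $U_tO_xU_{t-1}O_x\cdots U_1O_xU_0$, and outputs the result of measuring designated output qubits in the computational basis. It is exact if the output is correct with probability 1 for every input and query. *)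

From HB Require Import structures.
From mathcomp Require Import all_boot all_order all_algebra.
Set Implicit Arguments. Unset Strict Implicit. Unset Printing Implicit Defensive.
Import Order.TTheory GRing.Theory Num.Theory.
Local Open Scope ring_scope.

(* Computational basis of H_L (x) H_B (x) H_Z with a address qubits,
   one data qubit and w workspace qubits. *)
Definition qbasis (a w : nat) : finType := ('I_(2 ^ a) * bool * 'I_(2 ^ w))%type.

Definition naddr (s : nat) : nat := up_log 2 s.

(* Operators on the space, given by their matrix entries U y x = <y|U|x>. *)
Definition qop (C : numClosedFieldType) (a w : nat) := qbasis a w -> qbasis a w -> C.
Definition qstate (C : numClosedFieldType) (a w : nat) := qbasis a w -> C.

Definition unitary (C : numClosedFieldType) (a w : nat) (U : qop C a w) : Prop :=
  (forall x x' : qbasis a w,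
     \sum_(y : qbasis a w) (U y x)^* * U y x' = (x == x')%:R) /\
  (forall y y' : qbasis a w,
     \sum_(x : qbasis a w) U y x * (U y' x)^* = (y == y')%:R).

Definition apply_op (C : numClosedFieldType) (a w : nat) (U : qop C a w)
  (v : qstate C a w) : qstate C a w := fun y => \sum_(x : qbasis a w) U y x * v x.

Definition ket (C : numClosedFieldType) (a w : nat) (b : qbasis a w) : qstate C a w :=
  fun y => (y == b)%:R.

(* Bit x_l of the input string; addresses l >= s (which exist when s is not a
   power of two) are read as 0, i.e. the oracle acts as the identity there. *)
Definition xbit (s : nat) (x : {ffun 'I_s -> bool}) (a : nat) (l : 'I_(2 ^ a)) : bool :=
  match @insub nat (fun k => k < s)%N _ (val l) with
  | Some j => x j
  | None => false
  end.

Definition oracle_basis (s : nat) (x : {ffun 'I_s -> bool}) (w : nat)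
  (y : qbasis (naddr s) w) : qbasis (naddr s) w :=
  let: (l, b, z) := y in (l, xorb b (xbit x l), z).

Definition apply_oracle (C : numClosedFieldType) (s : nat) (x : {ffun 'I_s -> bool})
  (w : nat) (v : qstate C (naddr s) w) : qstate C (naddr s) w :=
  fun y => v (oracle_basis x y).

Definition final_state (C : numClosedFieldType) (s : nat) (x : {ffun 'I_s -> bool})
  (w : nat) (U0 U1 : qop C (naddr s) w) (b0 : qbasis (naddr s) w) :
  qstate C (naddr s) w :=
  apply_op U1 (apply_oracle x (apply_op U0 (ket C b0))).

(* Probability that measuring in the computational basis and applying the
   output map [out] (reading the designated output qubits) yields [ans]. *)
Definition prob_output (C : numClosedFieldType) (a w : nat) (psi : qstate C a w)
  (out : qbasis a w -> bool) (ans : bool) : C :=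
  \sum_(y : qbasis a w | out y == ans) `|psi y| ^+ 2.

(** A one-probe algorithm queries the oracle once, so every amplitude of its
    final state is an affine function of the bits of the encoding [x]; hence
    so is the overlap [G_i x] of the final state on query [i] with the
    accepting part of the final state on the encoding of [{i}].  Exactness
    forces [G_i] to be [1] on the encoding of [{i}] and [0] on the encodings
    of [{j}] (j <> i) and of the empty set.  The differences of the encodings
    of the [m] singletons and of the empty set thus form an [m x s] matrix with
    a right inverse, and [m <= s] by comparing ranks. *)
From HB Require Import structures.
From mathcomp Require Import all_boot all_order all_algebra.
Import Order.TTheory GRing.Theory Num.Theory.
Set Implicit Arguments. Unset Strict Implicit.
Local Open Scope ring_scope.

Definition affine_bits (R : pzRingType) (s : nat) (f : {ffun 'I_s -> bool} -> R) :=
  exists (c : R) (a : 'I_s -> R), forall x, f x = c + \sum_k (x k)%:R * a k.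

Section AffineBits.

Variables (R : pzRingType) (s : nat).
Implicit Types (f g : {ffun 'I_s -> bool} -> R).

Lemma affine_bits_const (c : R) : affine_bits (fun _ : {ffun 'I_s -> bool} => c).
Proof. by exists c, (fun=> 0) => x; rewrite big1 ?addr0 // => k _; rewrite mulr0. Qed.

Lemma affine_bitsD f g :
  affine_bits f -> affine_bits g -> affine_bits (fun x => f x + g x).
Proof.
move=> [c [a Ha]] [d [b Hb]]; exists (c + d), (fun k => a k + b k) => x.
rewrite Ha Hb addrACA; congr (_ + _).
by rewrite -big_split; apply: eq_bigr => k _; rewrite mulrDr.
Qed.

Lemma affine_bitsMl (u : R) f : affine_bits f -> affine_bits (fun x => u * f x).
Proof.
move=> [c [a Ha]]; exists (u * c), (fun k => u * a k) => x.
rewrite Ha mulrDr mulr_sumr; congr (_ + _); apply: eq_bigr => k _.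
by rewrite !mulr_natl mulrnAr.
Qed.

Lemma affine_bits_sum (I : Type) (r : seq I) (P : pred I)
    (F : I -> {ffun 'I_s -> bool} -> R) :
  (forall i, affine_bits (F i)) -> affine_bits (fun x => \sum_(i <- r | P i) F i x).
Proof.
move=> affF; elim: r => [|i r IHr].
  by have [c [a Ha]] := affine_bits_const 0; exists c, a => x; rewrite big_nil -Ha.
have [Pi|nPi] := boolP (P i).
  have [c [a Ha]] := affine_bitsD (affF i) IHr.
  by exists c, a => x; rewrite big_cons Pi -Ha.
by have [c [a Ha]] := IHr; exists c, a => x; rewrite big_cons (negbTE nPi) -Ha.
Qed.

Lemma affine_bits_if (k : 'I_s) (c d : R) :
  affine_bits (fun x : {ffun 'I_s -> bool} => if x k then d else c).
Proof.
exists c, (fun k' => (k' == k)%:R * (d - c)) => x.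
rewrite (bigD1 k) //= eqxx mul1r big1 ?addr0; last first.
  by move=> k' /negbTE ->; rewrite mul0r mulr0.
by case: (x k); rewrite ?mul1r ?mul0r ?addr0 // addrC subrK.
Qed.

Lemma affine_bitsB f :
  affine_bits f -> exists a : 'I_s -> R,
    forall x y, f x - f y = \sum_k ((x k)%:R - (y k)%:R) * a k.
Proof.
move=> [c [a Ha]]; exists a => x y.
by rewrite !Ha opprD addrACA subrr add0r -sumrB; apply: eq_bigr => k _; rewrite mulrBl.
Qed.

End AffineBits.

(* The linear parts of the [f_i] form a right inverse of the [m x s] matrix
   of differences [x_j - z]. *)
Lemma affine_bits_separation_le (F : fieldType) (m s : nat)
    (f : 'I_m -> {ffun 'I_s -> bool} -> F) (x : 'I_m -> {ffun 'I_s -> bool})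
    (z : {ffun 'I_s -> bool}) :
  (forall i, affine_bits (f i)) -> (forall i j, f i (x j) - f i z = (j == i)%:R) ->
  (m <= s)%N.
Proof.
move=> affF sepF.
have [a Ha] := fin_all_exists (fun i => affine_bitsB (affF i)).
pose D := \matrix_(j < m, k < s) ((x j k)%:R - (z k)%:R : F).
pose A := \matrix_(k < s, i < m) a i k.
have DA : D *m A = 1%:M.
  by apply/matrixP => j i; rewrite !mxE -sepF Ha; apply: eq_bigr => k _; rewrite !mxE.
have := mxrankM_maxl D A; rewrite DA mxrank1 => /leq_trans; apply.
exact: rank_leq_col.
Qed.

Section Measurement.

Variables (C : numClosedFieldType) (a w : nat).

Lemma norm2_apply_op (U : qop C a w) (v : qstate C a w) :
  unitary U -> \sum_t `|apply_op U v t| ^+ 2 = \sum_t `|v t| ^+ 2.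
Proof.
case=> U_isometry _.
transitivity (\sum_t \sum_x' \sum_x ((v x')^* * v x) * ((U t x')^* * U t x)).
  apply: eq_bigr => t _; rewrite normCKC /apply_op rmorph_sum mulr_suml.
  apply: eq_bigr => x' _; rewrite mulr_sumr; apply: eq_bigr => x _.
  by rewrite rmorphM /= mulrACA mulrC.
rewrite exchange_big; apply: eq_bigr => x' _ /=.
transitivity (\sum_x (v x')^* * v x * (x' == x)%:R).
  by rewrite exchange_big; apply: eq_bigr => x _; rewrite -mulr_sumr U_isometry.
rewrite (bigD1 x') //= eqxx mulr1 big1 ?addr0 => [|x nx'x]; first by rewrite normCKC mulrC.
by rewrite eq_sym (negbTE nx'x) mulr0.
Qed.

Lemma norm2_ket (b : qbasis a w) : \sum_t `|ket C b t| ^+ 2 = 1.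
Proof.
rewrite (bigD1 b) //= big1 ?addr0 => [|t /negbTE bt]; rewrite /ket.
  by rewrite eqxx normr1 expr1n.
by rewrite bt normr0 expr0n.
Qed.

Lemma prob_output1_eq0 (psi : qstate C a w) (out : qbasis a w -> bool) (ans : bool) :
  \sum_t `|psi t| ^+ 2 = 1 -> prob_output psi out ans = 1 ->
  forall t, out t != ans -> psi t = 0.
Proof.
move=> psi_unit prob1 t t_not_ans.
have others0 : \sum_(t | out t != ans) `|psi t| ^+ 2 = 0.
  apply: (@addrI _ 1); rewrite addr0 -{2}psi_unit -prob1.
  by rewrite [RHS](bigID (fun t => out t == ans)).
have /eqP : `|psi t| ^+ 2 = 0.
  by apply: (psumr_eq0P _ others0) => // i _; rewrite exprn_ge0.
by rewrite expf_eq0 /= normr_eq0 => /eqP.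
Qed.

End Measurement.

Section OneProbe.

Variables (C : numClosedFieldType) (s w : nat).
Local Notation qbasis := (qbasis (naddr s) w).

Lemma affine_bits_oracle (v : qstate C (naddr s) w) (y : qbasis) :
  affine_bits (fun x => v (oracle_basis x y)).
Proof.
case: y => [[l b] z]; rewrite /oracle_basis /xbit.
case: insubP => [k _ _ | _]; last first.
  have -> : xorb b false = b by case: b.
  exact: affine_bits_const.
have [c [a Ha]] := affine_bits_if k (v (l, b, z)) (v (l, ~~ b, z)).
exists c, a => x; rewrite -Ha.
by case: (x k); case: b {Ha}.
Qed.

Lemma affine_bits_final_state (U0 U1 : qop C (naddr s) w) (b0 t : qbasis) :
  affine_bits (fun x => final_state x U0 U1 b0 t).
Proof.
apply: affine_bits_sum => y; apply: affine_bitsMl; exact: affine_bits_oracle.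
Qed.

Lemma norm2_apply_oracle x (v : qstate C (naddr s) w) :
  \sum_t `|apply_oracle x v t| ^+ 2 = \sum_t `|v t| ^+ 2.
Proof.
have oracleK : involutive (@oracle_basis s x w).
  by case=> [[l b] z] /=; case: b; case: (xbit x l).
by rewrite [RHS](reindex_inj (inv_inj oracleK)).
Qed.


Lemma norm2_final_state x (U0 U1 : qop C (naddr s) w) (b0 : qbasis) :
  unitary U0 -> unitary U1 -> \sum_t `|final_state x U0 U1 b0 t| ^+ 2 = 1.
Proof.
by move=> U0u U1u; rewrite norm2_apply_op // norm2_apply_oracle norm2_apply_op // norm2_ket.
Qed.

End OneProbe.

Theorem mainTheorem6 (C : numClosedFieldType) (m n s : nat) :
  (0 < n)%N -> (0 < m)%N -> (n <= m)%N ->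
  forall (phi : {set 'I_m} -> {ffun 'I_s -> bool}) (w : nat)
         (init : 'I_m -> qbasis (naddr s) w)
         (U0 U1 : qop C (naddr s) w) (out : qbasis (naddr s) w -> bool),
  unitary U0 -> unitary U1 ->
  (forall (S : {set 'I_m}), (#|S| <= n)%N -> forall i : 'I_m,
     prob_output (final_state (phi S) U0 U1 (init i)) out (i \in S) = 1) ->
  (m <= s)%N.
Proof.
move=> n_gt0 _ _ phi w init U0 U1 out U0u U1u correct.
pose psi x i := final_state x U0 U1 (init i).
pose G i x := \sum_(t | out t) (psi (phi [set i]) i t)^* * psi x i t.
have G_affine i : affine_bits (G i).
  apply: affine_bits_sum => t; apply: affine_bitsMl; exact: affine_bits_final_state.
have G_self i : G i (phi [set i]) = 1.
  rewrite -(correct [set i] _ i) ?cards1 // set11.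
  by apply: eq_big => [t | t _]; rewrite ?eqb_id ?normCKC.
have G_out i (S : {set 'I_m}) : (#|S| <= n)%N -> i \notin S -> G i (phi S) = 0.
  move=> S_small iNS; rewrite /G big1 // => t out_t.
  have := correct S S_small i; rewrite (negbTE iNS) => prob1.
  by rewrite /psi (prob_output1_eq0 (norm2_final_state _ _ U0u U1u) prob1) ?out_t ?mulr0.
apply: (affine_bits_separation_le (x := fun j => phi [set j]) (z := phi set0) G_affine).
move=> i j; rewrite (G_out i set0) ?cards0 ?in_set0 // subr0.
have [->|ji] := eqVneq j i; first exact: G_self.
by rewrite G_out ?cards1 // in_set1 eq_sym.
Qed.
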